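(* $W'_{\mathrm{tw}}(C_4)=4$.
   Context: Graphs are finite simple graphs; $C_4$ is the cycle on 4 vertices. A graph is 2-connected if it has more than 2 vertices, is connected, and remains connected after removal of any single vertex. We use first-order logic of graphs with relation symbols for adjacency and equality only; the variable width of a sentence is the number of distinct variables it uses. For a graph $F$, $W'_{\mathrm{tw}}(F)$ is the minimum $m$ for which there are a first-order sentence $\Phi$ of variable width $m$ and an integer $k$ such that for every 2-connected graph $G$ of treewidth at least $k$, $G\models\Phi$ if and only if $G$ contains a (not necessarily induced) subgraph isomorphic to $F$. *)

From mathcomp Require Import all_boot.
Set Implicit Arguments. Unset Strict Implicit. Unset Printing Implicit Defensive.

Record sgraph := SGraph {
  vertex :> finType;
  adj : rel vertex;
  adj_sym : symmetric adj;
  adj_irrefl : irreflexive adj }.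

Definition C4_adj : rel 'I_4 :=
  fun i j => (j == (i.+1 %% 4) :> nat) || (i == (j.+1 %% 4) :> nat).
Lemma C4_sym : symmetric C4_adj.
Proof. by move=> i j; rewrite /C4_adj orbC. Qed.
Lemma C4_irrefl : irreflexive C4_adj.
Proof. by move=> [[|[|[|[|n]]]] Hn]. Qed.
Definition C4 : sgraph := @SGraph 'I_4 C4_adj C4_sym C4_irrefl.

Definition contains_subgraph (G F : sgraph) : Prop :=
  exists f : F -> G, injective f /\ forall u v, adj u v -> adj (f u) (f v).

Definition connected_in (T : finType) (e : rel T) (S : {set T}) : Prop :=
  {in S &, forall x y,
     connect (fun a b => [&& e a b, a \in S & b \in S]) x y}.

Definition connected_graph (G : sgraph) : Prop := connected_in (@adj G) [set: G].

Definition two_connected (G : sgraph) : Prop :=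
  [/\ 2 < #|G|, connected_graph G &
      forall v : G, connected_in (@adj G) ([set: G] :\ v)].

Record tree := Tree {
  tnode :> finType;
  tedge : rel tnode;
  tedge_sym : symmetric tedge;
  tedge_irrefl : irreflexive tedge;
  tree_connected : connected_in tedge [set: tnode];
  tree_acyclic : ~ exists c : seq tnode, [/\ 2 < size c, uniq c & cycle tedge c] }.

Record tree_decomposition (G : sgraph) := TreeDec {
  td_tree : tree;
  bag : td_tree -> {set G};
  td_vertex : forall v : G, exists t, v \in bag t;
  td_edge : forall u v : G, adj u v -> exists t, (u \in bag t) && (v \in bag t);
  td_conn : forall v : G, connected_in (@tedge td_tree) [set t | v \in bag t] }.

(* width of a decomposition = (max bag size) - 1; treewidth = min width.
   "treewidth at least k" <-> every tree decomposition has a bag of size > k. *)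
Definition tw_at_least (G : sgraph) (k : nat) : Prop :=
  forall D : tree_decomposition G, exists t : td_tree D, k < #|@bag G D t|.

Inductive formula :=
  | FAdj of nat & nat
  | FEq of nat & nat
  | FTrue
  | FFalse
  | FNot of formula
  | FAnd of formula & formula
  | FOr of formula & formula
  | FImp of formula & formula
  | FExists of nat & formula
  | FForall of nat & formula.

Fixpoint vars (f : formula) : seq nat :=
  match f with
  | FAdj x y | FEq x y => [:: x; y]
  | FTrue | FFalse => [::]
  | FNot g => vars g
  | FAnd g h | FOr g h | FImp g h => vars g ++ vars h
  | FExists x g | FForall x g => x :: vars g
  end.

Fixpoint free_vars (f : formula) : seq nat :=
  match f with
  | FAdj x y | FEq x y => [:: x; y]
  | FTrue | FFalse => [::]
  | FNot g => free_vars g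
  | FAnd g h | FOr g h | FImp g h => free_vars g ++ free_vars h
  | FExists x g | FForall x g => filter (predC1 x) (free_vars g)
  end.

Definition sentence (f : formula) : Prop := free_vars f = [::].

Definition var_width (f : formula) : nat := size (undup (vars f)).

Definition upd (V : Type) (env : nat -> V) (x : nat) (v : V) : nat -> V :=
  fun y => if y == x then v else env y.

Fixpoint holds (G : sgraph) (env : nat -> G) (f : formula) : Prop :=
  match f with
  | FAdj x y => adj (env x) (env y)
  | FEq x y => env x = env y
  | FTrue => True
  | FFalse => False
  | FNot g => ~ holds env g
  | FAnd g h => holds env g /\ holds env h
  | FOr g h => holds env g \/ holds env h
  | FImp g h => holds env g -> holds env h
  | FExists x g => exists v : G, holds (upd env x v) g
  | FForall x g => forall v : G, holds (upd env x v) g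
  end.

(* G |= Phi for a sentence Phi (the assignment is irrelevant for sentences;
   all graphs considered below are nonempty). *)
Definition models (G : sgraph) (f : formula) : Prop :=
  forall env : nat -> G, holds env f.

Definition defines_on_tw (F : sgraph) (Phi : formula) (k : nat) : Prop :=
  forall G : sgraph, two_connected G -> tw_at_least G k ->
    (models G Phi <-> contains_subgraph G F).

Definition admissible_width (F : sgraph) (m : nat) : Prop :=
  exists Phi k, [/\ sentence Phi, var_width Phi = m & defines_on_tw F Phi k].

Definition W'tw_eq (F : sgraph) (m : nat) : Prop :=
  admissible_width F m /\ forall m', admissible_width F m' -> m <= m'.

From mathcomp Require Import all_boot all_algebra zify ring.
Set Implicit Arguments. Unset Strict Implicit. Unset Printing Implicit Defensive.

(* The sentence "x0 ~ x1 ~ x2 ~ x3 ~ x0 for some x0 != x2 and x1 != x3" has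
   width 4. For the lower bound, consider symmetric incidence structures in
   which any two distinct points have a common third point with any prescribed
   pair of incidences. In the bipartite double cover of such a structure every
   two-pebble position can be extended, so the side-preserving partial
   isomorphisms on two pebbles are a winning strategy for Duplicator in the
   3-pebble game between any two such covers: no 3-variable sentence separates
   them. The rook's structure on an (n+3) x (n+3) board and the orthogonality
   polarity of the projective plane over F_p both qualify; the first cover
   contains C4, while the second, the point-line incidence graph, does not.
   Both covers are 2-connected and, for n and p large, have minimum degree at
   least k, hence treewidth at least k: pruning leaves shows that every tree
   decomposition has a bag containing some vertex together with all its
   neighbours. *)

(** * Connectivity and tree decompositions *)

Section Trees.
Variables (T : finType) (e : rel T).
Hypotheses (e_sym : symmetric e) (e_irr : irreflexive e)
  (e_acyclic : ~ exists c : seq T, [/\ 2 < size c, uniq c & cycle e c]).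

Definition rel_in (S : {set T}) : rel T := fun a b => [&& e a b, a \in S & b \in S].

Lemma rel_in_sym S : symmetric (rel_in S).
Proof.
by move=> a b; rewrite /rel_in e_sym; case: (a \in S); case: (b \in S); rewrite ?andbF.
Qed.

Lemma path_rel_in_sub S x p : path (rel_in S) x p -> {subset p <= S}.
Proof.
elim: p x => [|y p IH] x //= /andP[/and3P[_ _ yS] yp] z.
by rewrite inE => /predU1P[-> //|]; apply: IH yp z.
Qed.

(* A vertex with at most one neighbour in S cannot be an inner vertex of a
   shortest path inside S. *)
Lemma connected_in_setD1 (S : {set T}) l :
  (forall a b, a \in S -> b \in S -> e l a -> e l b -> a = b) ->
  connected_in e S -> connected_in e (S :\ l).
Proof.
move=> l_nb1 conS x y; rewrite !inE => /andP[xl xS] /andP[yl yS].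
case/connectP: (conS x y xS yS) => p xp ->{y yS} in yl *.
case: (shortenP xp) => p' xp' up' _ in yl *.
have lp' : l \notin p'.
  apply/negP=> /splitPr lp'; move: lp' up' xp' yl => [p1 [|z p2]].
    by rewrite last_cat eqxx.
  rewrite -cat_cons cat_uniq => /and3P[_ /hasPn/(_ z) + _].
  rewrite !inE eqxx orbT => /(_ isT)/negP zp xp' _; apply: zp.
  move: xp'; rewrite cat_path /= => /and3P[_ /and3P[e1 S1 _] /andP[/and3P[e2 _ S2] _]].
  by rewrite -(l_nb1 _ _ S1 S2 _ e2) -?in_cons ?mem_last // e_sym.
apply/connectP; exists p' => //.
apply: (@sub_in_path _ [pred z | z != l]) xp'.
  by move=> a b; rewrite !inE => al bl /and3P[eab aS bS]; rewrite eab al bl aS bS.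
by rewrite /= xl; apply/allP => z zp; apply: contraNneq lp' => <-.
Qed.

Lemma maximal_path (U : {set T}) x p :
  path (rel_in U) x p -> uniq (x :: p) -> x \in U ->
  exists y q, [/\ path (rel_in U) y q, uniq (y :: q), y \in U, size p <= size q
    & forall w, rel_in U w y -> w \in y :: q].
Proof.
have [n] := ubnP (#|U| - size p); elim: n x p => // n IH x p lt_n xp ux xU.
case: (pickP [pred w | rel_in U w x && (w \notin x :: p)]) => [w /andP[wx wp]|max_x].
  have size_xp : size (x :: p) <= #|U|.
    rewrite cardE; apply: uniq_leq_size => // z.
    by rewrite mem_enum inE => /predU1P[-> //|/(path_rel_in_sub xp)].
  have [||||y [q [yq uy yU le_pq max_y]]] := IH w (x :: p); rewrite /= ?wx ?xp ?wp //.
  - by move: lt_n size_xp => /=; lia.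
  - by case/and3P: wx.
  by exists y, q; split=> //; apply: ltnW.
exists x, p; split => // w wx.
by have := max_x w; rewrite /= wx /= => /negbFE.
Qed.

Lemma acyclic_no_chord y z s q :
  path e y (z :: q) -> uniq [:: y, z & q] -> s \in q -> ~~ e s y.
Proof.
move=> + + sq; case/splitPr: sq => p1 p2.
rewrite -cat_rcons -!cat_cons cat_path cat_uniq => /andP[yp _] /andP[uc _].
apply/negP => sy; apply: e_acyclic.
exists [:: y, z & rcons p1 s]; split => //; first by rewrite /= size_rcons.
by rewrite /cycle rcons_path yp /= last_rcons.
Qed.

(* The head of a non-extendable path is a leaf: a second neighbour would lie
   further along the path and close a cycle. *)
Lemma exists_leaf (U : {set T}) : connected_in e U -> 1 < #|U| ->
  exists l q, [/\ l \in U, q \in U, e l q & forall s, s \in U -> e l s -> s = q].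
Proof.
move=> conU /card_gt1P[a [b [aU bU ab]]].
case/connectP: (conU a b aU bU) => [[|c p] /=]; first by move=> _ ba; rewrite ba eqxx in ab.
move=> /andP[ac _] _.
have uac : uniq [:: a; c].
  case/and3P: ac => eac _ _; rewrite /= inE andbT.
  by apply: contraTneq eac => ->; rewrite e_irr.
have [y [q [+ uy yU + max_y]]] := @maximal_path U a [:: c] (introT andP (conj ac isT)) uac aU.
case: q uy max_y => [//|z q] uy max_y /andP[/and3P[eyz _ zU] zq] _.
exists y, z; split => // s sU eys.
have /max_y : rel_in U s y by rewrite /rel_in e_sym eys sU yU.
rewrite !inE => /or3P[/eqP sy|/eqP // |sq]; first by rewrite sy e_irr in eys.
have yzq : path e y (z :: q).
  apply: (@sub_path _ (rel_in U)) => [u v /and3P[] //|].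
  by apply/andP; split; [rewrite /rel_in eyz yU zU | exact: zq].
by have := acyclic_no_chord yzq uy sq; rewrite e_sym eys.
Qed.

Section Decomposition.
Variables (G : sgraph) (bag : T -> {set G}).

Definition decomposes (U : {set T}) : Prop :=
  [/\ forall v, exists2 t, t \in U & v \in bag t,
      forall u v, adj u v -> exists2 t, t \in U & (u \in bag t) && (v \in bag t)
    & forall v, connected_in e (U :&: [set t | v \in bag t])].

Section Leaf.
Variables (U : {set T}) (l q : T).
Hypotheses (lU : l \in U) (qU : q \in U) (elq : e l q)
  (l_leaf : forall s, s \in U -> e l s -> s = q).

Lemma connected_in_setD1_leaf (S : {set T}) :
  S \subset U -> connected_in e S -> connected_in e (S :\ l).
Proof.
move/subsetP=> SU; apply: connected_in_setD1 => a b /SU aU /SU bU la lb.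
by rewrite (l_leaf aU la) (l_leaf bU lb).
Qed.

Lemma decomposes_setD1_leaf :
  bag l \subset bag q -> decomposes U -> decomposes (U :\ l).
Proof.
move=> lq [cover_v cover_e conn_v].
have ql : q != l by apply: contraTneq elq => ->; rewrite e_irr.
have lq_in t : t \in U -> exists2 t', t' \in U :\ l & bag t \subset bag t'.
  move=> tU; case: (eqVneq t l) => [->|tl]; first by exists q; rewrite // !inE ql.
  by exists t; rewrite // !inE tl.
split.
- move=> v; have [t tU vt] := cover_v v; have [t' t'U /subsetP sub] := lq_in t tU.
  by exists t'; last exact: sub.
- move=> u v uv; have [t tU /andP[ut vt]] := cover_e u v uv.
  have [t' t'U /subsetP sub] := lq_in t tU.
  by exists t'; rewrite // !sub.
- by move=> v; rewrite setIDAC; apply: connected_in_setD1_leaf (conn_v v); apply: subsetIl.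
Qed.

(* A vertex of [bag l] missing from [bag q] occurs in no other bag, so the
   bags containing its edges are all [bag l]. *)
Lemma leaf_private_vertex v : decomposes U -> v \in bag l -> v \notin bag q ->
  forall u, adj v u -> u \in bag l.
Proof.
move=> [_ cover_e conn_v] vl vq.
have only_l t : t \in U -> v \in bag t -> t = l.
  move=> tU vt; apply/eqP; apply: contraNT vq => tl.
  have := conn_v v l t; rewrite !inE lU vl tU vt => /(_ isT isT).
  case/connectP => [[|s p] /=]; first by move=> _ tl'; rewrite -tl' eqxx in tl.
  move=> /andP[/and3P[els _] + _] _; rewrite !inE => /andP[sU sv].
  by rewrite -(l_leaf sU els).
move=> u vu; have [t tU /andP[vt ut]] := cover_e v u vu.
by rewrite -(only_l t tU vt).
Qed.

End Leaf.

Lemma decomposes_closed_neighbourhood (v0 : G) (U : {set T}) :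
  U != set0 -> connected_in e U -> decomposes U ->
  exists t v, [/\ t \in U, v \in bag t & forall u, adj v u -> u \in bag t].
Proof.
have [n] := ubnP #|U|; elim: n U => // n IH U ltUn U0 conU decU.
have [leU1|/(exists_leaf conU)[l [q [lU qU elq l_leaf]]]] := leqP #|U| 1.
  have [t0 t0U] := set0Pn _ U0; have [cover_v _ _] := decU.
  have all_t0 t : t \in U -> t = t0.
    by move=> tU; rewrite (elimT card_le1_eqP leU1 t t0 tU t0U).
  have in_t0 v : v \in bag t0 by have [t /all_t0 <-] := cover_v v.
  by exists t0, v0.
have [lq|/subsetPn[v vl vq]] := boolP (bag l \subset bag q); last first.
  by exists l, v; split=> //; apply: (@leaf_private_vertex U l q).
have ql : q != l by apply: contraTneq elq => ->; rewrite e_irr.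
have [||||t [v [tU vt nb_v]]] := IH (U :\ l).
- by rewrite (cardsD1 l) lU in ltUn.
- by apply/set0Pn; exists q; rewrite !inE ql.
- exact: (connected_in_setD1_leaf l_leaf (subxx U)).
- by apply: (@decomposes_setD1_leaf U l q).
by exists t, v; split=> //; case/setD1P: tU.
Qed.

End Decomposition.
End Trees.

Lemma tw_at_least_min_degree (G : sgraph) (k : nat) (v0 : G) :
  (forall v : G, k <= #|[set u | adj v u]|) -> tw_at_least G k.
Proof.
move=> deg_k D; have [t0 _] := td_vertex D v0.
have [|||t [v [_ vt nb_v]]] := @decomposes_closed_neighbourhood _ _ (@tedge_sym _)
  (@tedge_irrefl _) (@tree_acyclic _) G (@bag G D) v0 setT.
- by apply/set0Pn; exists t0.
- exact: tree_connected.
- split=> [u|u w uw|u].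
  + by have [t ut] := td_vertex D u; exists t.
  + by have [t utw] := td_edge D uw; exists t.
  + by rewrite setTI; exact: td_conn.
exists t; apply: leq_ltn_trans (deg_k v) _.
have -> : #|[set u | adj v u]|.+1 = #|v |: [set u | adj v u]|.
  by rewrite cardsU1 inE (@adj_irrefl G v).
apply/subset_leq_card/subsetP => u; rewrite !inE => /predU1P[-> //|]; exact: nb_v.
Qed.

Lemma exists_neq2 (T : finType) : 2 < #|T| -> forall i j : T, exists z, z != i /\ z != j.
Proof.
move=> T3 i j; have /subsetPn[z _] : ~~ ([set: T] \subset [set i; j]).
  apply: contraTN T3 => /subset_leq_card; rewrite cardsT -leqNgt => /leq_trans; apply.
  by rewrite cards2; case: (i != j).
by rewrite !inE => /norP[zi zj]; exists z.
Qed.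

Lemma two_connected_setD1 (G : sgraph) : 2 < #|G| ->
  (forall v : G, connected_in (@adj G) ([set: G] :\ v)) -> two_connected G.
Proof.
move=> G3 conn_v; split=> // x y _ _; have [w [wx wy]] := exists_neq2 G3 x y.
have := conn_v w x y; rewrite !inE ![_ == w]eq_sym wx wy => /(_ isT isT).
by apply: connect_sub => a b /and3P[ab _ _]; apply: connect1; rewrite /= ab !inE.
Qed.

(** * Three-variable logic *)

Lemma free_vars_sub f : {subset free_vars f <= vars f}.
Proof.
elim: f => [x y|x y|||g IH|g IHg h IHh|g IHg h IHh|g IHg h IHh|x g IH|x g IH] z //=;
  rewrite ?mem_cat ?mem_filter ?inE.
- exact: IH.
- by case/orP=> [/IHg|/IHh] ->; rewrite ?orbT.
- by case/orP=> [/IHg|/IHh] ->; rewrite ?orbT.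
- by case/orP=> [/IHg|/IHh] ->; rewrite ?orbT.
- by case/andP=> _ /IH ->; rewrite orbT.
- by case/andP=> _ /IH ->; rewrite orbT.
Qed.

Lemma size_undup_filter_lt (x : nat) (L V : seq nat) :
  x \in V -> {subset L <= V} -> size (undup (filter (predC1 x) L)) < size (undup V).
Proof.
move=> xV LV; rewrite -/(size (x :: _)); apply: uniq_leq_size.
  by rewrite /= undup_uniq mem_undup mem_filter /= eqxx.
move=> z; rewrite inE !mem_undup => /predU1P[-> //|]; rewrite mem_filter.
by case/andP=> _ /LV.
Qed.

Lemma quantifier_iff (A B : Type) (P : A -> Prop) (Q : B -> Prop) (M : A -> B -> Prop) :
  (forall a b, M a b -> (P a <-> Q b)) ->
  (forall a, exists b, M a b) -> (forall b, exists a, M a b) ->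
  ((exists a, P a) <-> (exists b, Q b)) /\ ((forall a, P a) <-> (forall b, Q b)).
Proof.
move=> PQ MA MB; split; split.
- by case=> a Pa; have [b Mab] := MA a; exists b; apply/(PQ _ _ Mab).
- by case=> b Qb; have [a Mab] := MB b; exists a; apply/(PQ _ _ Mab).
- by move=> HP b; have [a Mab] := MB b; apply/(PQ _ _ Mab).
- by move=> HQ a; have [b Mab] := MA a; apply/(PQ _ _ Mab).
Qed.

Section ForthSystem.
Variables (G1 G2 : sgraph) (R : G1 -> G1 -> G2 -> G2 -> Prop).

(* [R u v u' v']: the pebble pair [(u, v)] on [G1] may be answered by [(u', v')]
   on [G2]. If the transpose of [R] is a forth system as well, [R] is a winning
   strategy for Duplicator in the 3-pebble game. *)
Record forth_system : Prop := ForthSystem {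
  forth_eq u v u' v' : R u v u' v' -> (u == v) = (u' == v');
  forth_adj u v u' v' : R u v u' v' -> adj u v = adj u' v';
  forth_swap u v u' v' : R u v u' v' -> R v u v' u';
  forth_diag u v u' v' : R u v u' v' -> R u u u' u';
  forth_one c : exists d, R c c d d;
  forth_two a1 a2 b1 b2 : R a1 a2 b1 b2 ->
    forall c, exists d, R c a1 d b1 /\ R c a2 d b2 }.

Definition rel_on (L : seq nat) (e1 : nat -> G1) (e2 : nat -> G2) : Prop :=
  {in L &, forall x y, R (e1 x) (e1 y) (e2 x) (e2 y)}.

Lemma rel_on_sub L L' e1 e2 : {subset L' <= L} -> rel_on L e1 e2 -> rel_on L' e1 e2.
Proof. by move=> sub RL x y /sub xL /sub yL; apply: RL. Qed.

Hypothesis RS : forth_system.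

Lemma rel_on_forth L e1 e2 : size (undup L) <= 2 -> rel_on L e1 e2 ->
  forall c, exists d, R c c d d /\ {in L, forall y, R c (e1 y) d (e2 y)}.
Proof.
move=> + RL c; have memL y : (y \in L) = (y \in undup L) by rewrite mem_undup.
case: (undup L) memL => [|y [|z []]] // memL _.
- by have [d cd] := forth_one RS c; exists d; split=> // y; rewrite memL.
- have yL : y \in L by rewrite memL mem_seq1.
  have [d [cd _]] := forth_two RS (RL y y yL yL) c.
  by exists d; split=> [|y']; [apply: forth_diag cd | rewrite memL mem_seq1 => /eqP ->].
- have yL : y \in L by rewrite memL !inE eqxx.
  have zL : z \in L by rewrite memL !inE eqxx orbT.
  have [d [cyd czd]] := forth_two RS (RL y z yL zL) c.
  by exists d; split=> [|y']; [apply: forth_diag cyd | rewrite memL !inE => /orP[]/eqP ->].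
Qed.

Lemma rel_on_upd L x e1 e2 : size (undup (filter (predC1 x) L)) <= 2 ->
  rel_on (filter (predC1 x) L) e1 e2 ->
  forall c, exists d, rel_on L (upd e1 x c) (upd e2 x d).
Proof.
move=> small RL c; have [d [cd c_d]] := rel_on_forth small RL c.
have Lx y : y \in L -> y != x -> y \in filter (predC1 x) L.
  by move=> yL yx; rewrite mem_filter /= yx.
exists d => y z yL zL; rewrite /upd.
case: (eqVneq y x) => [_|yx]; case: (eqVneq z x) => [_|zx] //.
- exact: c_d (Lx z zL zx).
- exact/forth_swap/c_d/(Lx y yL yx).
- exact: RL (Lx y yL yx) (Lx z zL zx).
Qed.

End ForthSystem.

Lemma forth_system_iff (G1 G2 : sgraph) (R R' : G1 -> G1 -> G2 -> G2 -> Prop) :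
  (forall u v u' v', R u v u' v' <-> R' u v u' v') -> forth_system R -> forth_system R'.
Proof.
move=> RR' [R_eq R_adj R_swap R_diag R_one R_two]; split.
- by move=> u v u' v' /RR'/R_eq.
- by move=> u v u' v' /RR'/R_adj.
- by move=> u v u' v' /RR'/R_swap/RR'.
- by move=> u v u' v' /RR'/R_diag/RR'.
- by move=> c; have [d /RR'] := R_one c; exists d.
- move=> a1 a2 b1 b2 /RR'/R_two ext c; have [d [/RR' cd1 /RR' cd2]] := ext c.
  by exists d.
Qed.

Definition transpose_rel (G1 G2 : sgraph) (R : G1 -> G1 -> G2 -> G2 -> Prop) :
  G2 -> G2 -> G1 -> G1 -> Prop := fun u' v' u v => R u v u' v'.

Section ThreePebbleGame.
Variables (G1 G2 : sgraph) (R : G1 -> G1 -> G2 -> G2 -> Prop).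
Hypotheses (RS : forth_system R) (RT : forth_system (transpose_rel R)).

Theorem holds_iff_3vars (V : seq nat) : size (undup V) <= 3 ->
  forall f, {subset vars f <= V} ->
  forall e1 e2, rel_on R (free_vars f) e1 e2 -> (holds e1 f <-> holds e2 f).
Proof.
move=> V3; have sub_cat (s1 s2 : seq nat) :
    {subset s1 ++ s2 <= V} -> {subset s1 <= V} /\ {subset s2 <= V}.
  by move=> sub; split=> z zs; apply: sub; rewrite mem_cat zs ?orbT.
have rel_on_cat L1 L2 e1 e2 : rel_on R (L1 ++ L2) e1 e2 ->
    rel_on R L1 e1 e2 /\ rel_on R L2 e1 e2.
  by move=> RL; split; apply: rel_on_sub RL => z zL; rewrite mem_cat zL ?orbT.
have quant x g e1 e2 :
    ({subset vars g <= V} -> forall e1 e2, rel_on R (free_vars g) e1 e2 ->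
      (holds e1 g <-> holds e2 g)) ->
    {subset x :: vars g <= V} -> rel_on R (filter (predC1 x) (free_vars g)) e1 e2 ->
    ((exists c, holds (upd e1 x c) g) <-> (exists d, holds (upd e2 x d) g)) /\
    ((forall c, holds (upd e1 x c) g) <-> (forall d, holds (upd e2 x d) g)).
  move=> IH Vxg RL; have Vg : {subset vars g <= V}.
    by move=> z zg; apply: Vxg; rewrite inE zg orbT.
  have small : size (undup (filter (predC1 x) (free_vars g))) <= 2.
    rewrite -ltnS; apply: leq_trans V3; apply: size_undup_filter_lt.
      by apply: Vxg; rewrite mem_head.
    by move=> z /free_vars_sub; apply: Vg.
  apply: (quantifier_iff (M := fun c d => rel_on R _ (upd e1 x c) (upd e2 x d))).
  - by move=> c d; apply: IH Vg _ _.
  - exact (rel_on_upd RS small RL).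
  - exact (rel_on_upd RT small RL).
have pair_in (x y : nat) : x \in [:: x; y] /\ y \in [:: x; y].
  by rewrite !inE !eqxx orbT.
elim=> [x y|x y|||g IH|g IHg h IHh|g IHg h IHh|g IHg h IHh|x g IH|x g IH] /= Vf e1 e2 Rf.
- by rewrite (forth_adj RS (Rf x y (pair_in x y).1 (pair_in x y).2)).
- have E := forth_eq RS (Rf x y (pair_in x y).1 (pair_in x y).2).
  by split=> /eqP; [rewrite E | rewrite -E] => /eqP.
- by [].
- by [].
- by move: (IH Vf e1 e2 Rf); tauto.
- move: Vf Rf => /sub_cat[Vg Vh] /rel_on_cat[Rg Rh].
  by move: (IHg Vg _ _ Rg) (IHh Vh _ _ Rh); tauto.
- move: Vf Rf => /sub_cat[Vg Vh] /rel_on_cat[Rg Rh].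
  by move: (IHg Vg _ _ Rg) (IHh Vh _ _ Rh); tauto.
- move: Vf Rf => /sub_cat[Vg Vh] /rel_on_cat[Rg Rh].
  by move: (IHg Vg _ _ Rg) (IHh Vh _ _ Rh); tauto.
- exact: (quant x g e1 e2 IH Vf Rf).1.
- exact: (quant x g e1 e2 IH Vf Rf).2.
Qed.

Corollary models_3vars_transfer (v1 : G1) Phi :
  sentence Phi -> var_width Phi <= 3 -> models G1 Phi -> models G2 Phi.
Proof.
move=> closed_Phi width_Phi G1_Phi e2.
have no_free : rel_on R (free_vars Phi) (fun=> v1) e2 by rewrite closed_Phi.
exact/(holds_iff_3vars width_Phi (fun z => id) no_free)/G1_Phi.
Qed.

End ThreePebbleGame.

(** * The 4-cycle *)

Lemma contains_C4P (G : sgraph) : contains_subgraph G C4 <->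
  exists x0 x1 x2 x3 : G, [/\ adj x0 x1, adj x1 x2, adj x2 x3, adj x3 x0
                            & (x0 != x2) && (x1 != x3)].
Proof.
pose o i (lt_i4 : i < 4) : 'I_4 := Ordinal lt_i4.
split=> [[f [inj_f adj_f]]|].
  exists (f (o 0 isT)), (f (o 1 isT)), (f (o 2 isT)), (f (o 3 isT)).
  by split; rewrite ?adj_f // ?(inj_eq inj_f).
move=> [x0 [x1 [x2 [x3 [a01 a12 a23 a30 /andP[n02 n13]]]]]].
have neq (u v : G) : adj u v -> u != v by apply: contraTneq => ->; rewrite adj_irrefl.
have uniq_x : uniq [:: x0; x1; x2; x3].
  by rewrite /= !inE !negb_or n02 n13 (neq _ _ a01) (neq _ _ a12) (neq _ _ a23)
    [x0 == x3]eq_sym (neq _ _ a30).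
exists (fun i : 'I_4 => nth x0 [:: x0; x1; x2; x3] i); split.
  by move=> i j /eqP; rewrite nth_uniq // => /eqP/val_inj.
move=> [[|[|[|[|i]]]] lt_i4] [[|[|[|[|j]]]] lt_j4] //=; rewrite /C4_adj /= => _;
  by rewrite // adj_sym.
Qed.

Definition C4_sentence : formula :=
  FExists 0 (FExists 1 (FExists 2 (FExists 3
    (FAnd (FAdj 0 1) (FAnd (FAdj 1 2) (FAnd (FAdj 2 3) (FAnd (FAdj 3 0)
    (FAnd (FNot (FEq 0 2)) (FNot (FEq 1 3)))))))))).

Lemma models_C4_sentence (G : sgraph) (v : G) :
  models G C4_sentence <-> contains_subgraph G C4.
Proof.
rewrite contains_C4P; split=> [/(_ (fun=> v))|[x0 [x1 [x2 [x3 [a01 a12 a23 a30]]]]]].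
  move=> [x0 [x1 [x2 [x3]]]]; rewrite /upd /= => -[a01 [a12 [a23 [a30 [n02 n13]]]]].
  by exists x0, x1, x2, x3; split=> //; apply/andP; split; apply/eqP.
move=> /andP[/eqP n02 /eqP n13] env.
by exists x0, x1, x2, x3; rewrite /upd /=.
Qed.

(** * Extension structures and their double covers *)

(* Loops [inc a a] are allowed, as for self-orthogonal points of a polarity. *)
Record ext_structure := ExtStructure {
  point :> finType;
  inc : rel point;
  inc_sym : symmetric inc;
  inc_ext2 : forall a1 a2 : point, a1 != a2 -> forall e1 e2 : bool,
    exists b, inc a1 b = e1 /\ inc a2 b = e2;
  point0 : point;
  point1 : point;
  point01 : point0 != point1 }.

Section ExtStructureTheory.
Variable S : ext_structure.

Lemma exists_point_neq (a : S) : exists b : S, b != a.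
Proof.
have [->|a0] := eqVneq a (point0 S); first by exists (point1 S); rewrite eq_sym point01.
by exists (point0 S); rewrite eq_sym.
Qed.

(* [inc_ext2] applied to [b] and a second point [m] ([a] itself, or any other
   point when [b = a]) gives a point whose incidence with [m] differs from that
   of [a], hence a point distinct from [a]. *)
Lemma inc_ext1 (a b : S) (e : bool) : exists a', a' != a /\ inc a' b = e.
Proof.
have [->|ba] := eqVneq b a.
  have [m ma] := exists_point_neq a; have am : a != m by rewrite eq_sym.
  have [y [ay my]] := inc_ext2 am e (~~ inc m a).
  exists y; rewrite inc_sym ay; split=> //.
  by apply/eqP=> ya; move: my; rewrite ya; case: (inc m a).
have [y [by_ ay]] := inc_ext2 ba e (~~ inc a a).
exists y; rewrite inc_sym by_; split=> //.
by apply/eqP=> ya; move: ay; rewrite ya; case: (inc a a).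
Qed.

Lemma point_neq2 (x y : S) : exists z, z != x /\ z != y.
Proof.
have [<-|xy] := eqVneq x y; first by have [z [zx _]] := inc_ext1 x x true; exists z.
have [w [xw yw]] := inc_ext2 xy true true; have [z [zx zw]] := inc_ext1 x w false.
by exists z; split=> //; apply: contraFneq _ zw => ->.
Qed.

End ExtStructureTheory.

Section DoubleCover.
Variable S : ext_structure.

Definition dcover_adj (u v : bool * S) := (u.1 != v.1) && inc u.2 v.2.

Lemma dcover_adj_sym : symmetric dcover_adj.
Proof. by move=> u v; rewrite /dcover_adj eq_sym inc_sym. Qed.

Lemma dcover_adj_irr : irreflexive dcover_adj.
Proof. by move=> u; rewrite /dcover_adj eqxx. Qed.

Definition dcover : sgraph := SGraph dcover_adj_sym dcover_adj_irr.

Lemma card_point_gt1 : 1 < #|S|.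
Proof. by apply/card_gt1P; exists (point0 S), (point1 S); rewrite point01. Qed.

Lemma card_dcover_gt2 : 2 < #|dcover|.
Proof. by rewrite card_prod card_bool; have := card_point_gt1; lia. Qed.

Lemma dcover_degree (v : dcover) : #|[set b | inc v.2 b]| <= #|[set u | adj v u]|.
Proof.
have inj : injective (fun b : S => (~~ v.1, b) : dcover) by move=> a b [].
rewrite -(card_imset _ inj); apply/subset_leq_card/subsetP => _ /imsetP[b + ->].
by rewrite !inE /= /dcover_adj /=; case: (v.1).
Qed.

Section DeleteVertex.
Variable v : dcover.
Let R := rel_in (@adj dcover) ([set: dcover] :\ v).

Lemma dcover_connect_side (x y : dcover) : x.1 = v.1 -> y.1 = v.1 ->
  x != v -> y != v -> connect R x y.
Proof.
move=> xv yv xnv ynv; have [<-|nxy] := eqVneq x y; first exact: connect0.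
have x2y2 : x.2 != y.2.
  by apply: contra nxy; case: x y xv yv {xnv ynv} => [? ?] [? ?] /= -> -> /eqP ->.
have [b [xb yb]] := inc_ext2 x2y2 true true.
have bv : ((~~ v.1, b) : dcover) != v by apply/eqP=> /(congr1 fst)/=; case: (v.1).
apply: (@connect_trans _ _ (~~ v.1, b)); apply: connect1;
  rewrite /R /rel_in !inE ?xnv ?ynv bv /= /dcover_adj /= ?xv ?yv.
- by rewrite xb; case: (v.1).
- by rewrite inc_sym yb; case: (v.1).
Qed.

Lemma dcover_connect_to_side (x : dcover) : x != v ->
  exists2 y : dcover, y.1 = v.1 & y != v /\ connect R x y.
Proof.
move=> xnv; have [xv|xv] := eqVneq x.1 v.1; first by exists x.
have [a [av xa]] := inc_ext1 v.2 x.2 true.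
have yv : ((v.1, a) : dcover) != v by apply/eqP=> /(congr1 snd)/eqP; rewrite (negbTE av).
exists (v.1, a) => //; split=> //; apply: connect1.
by rewrite /R /rel_in !inE xnv yv /= /dcover_adj /= xv inc_sym xa.
Qed.

Lemma dcover_connected_setD1 : connected_in (@adj dcover) ([set: dcover] :\ v).
Proof.
move=> x y; rewrite !inE => /andP[xnv _] /andP[ynv _].
have [x' x'v [x'nv xx']] := dcover_connect_to_side xnv.
have [y' y'v [y'nv yy']] := dcover_connect_to_side ynv.
apply: connect_trans xx' (connect_trans (dcover_connect_side x'v y'v x'nv y'nv) _).
by rewrite (sym_connect_sym (rel_in_sym (@adj_sym dcover) _)).
Qed.

End DeleteVertex.

Lemma dcover_two_connected : two_connected dcover.
Proof. exact: two_connected_setD1 card_dcover_gt2 dcover_connected_setD1. Qed.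

End DoubleCover.

Section PointConstraints.
Variable S : ext_structure.

(* [Some e]: incidence with [b] equals [e]; [None]: distinct from [b]. *)
Definition meets (z b : S) (o : option bool) : bool :=
  if o is Some e then inc z b == e else z != b.

Lemma exists_meets2 (b1 b2 : S) o1 o2 :
  (b1 = b2 -> forall e1 e2, o1 = Some e1 -> o2 = Some e2 -> e1 = e2) ->
  exists z, meets z b1 o1 && meets z b2 o2.
Proof.
case: o1 o2 => [e1|] [e2|] /= consistent.
- have [eb|b12] := eqVneq b1 b2.
    have [z [_ zb]] := inc_ext1 b1 b1 e1.
    by exists z; rewrite -eb zb (consistent eb e1 e2) ?eqxx.
  have [z [z1 z2]] := inc_ext2 b12 e1 e2.
  by exists z; rewrite inc_sym z1 inc_sym z2 !eqxx.
- by have [z [zb2 zb1]] := inc_ext1 b2 b1 e1; exists z; rewrite zb1 eqxx.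
- by have [z [zb1 zb2]] := inc_ext1 b1 b2 e2; exists z; rewrite zb1 zb2 eqxx.
- by have [z [zb1 zb2]] := point_neq2 b1 b2; exists z; rewrite zb1 zb2.
Qed.

End PointConstraints.

Section DoubleCoverMatch.
Variables S1 S2 : ext_structure.

Definition dcover_match (u v : dcover S1) (u' v' : dcover S2) : Prop :=
  [/\ u.1 = u'.1, v.1 = v'.1, (u == v) = (u' == v') & dcover_adj u v = dcover_adj u' v'].

(* What the answer [(c.1, z)] to [c] owes the answer [b] to [a]: on the side
   of [a] it only has to avoid [b]; across, [z] must copy the incidence of [c]
   with [a]. *)
Definition constraint (c a : dcover S1) : option bool :=
  if c.1 == a.1 then None else Some (inc c.2 a.2).

Lemma dcover_match_meets (c a : dcover S1) (b : dcover S2) z :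
  c != a -> a.1 = b.1 -> meets z b.2 (constraint c a) -> dcover_match c a (c.1, z) b.
Proof.
case: c a b => [s x] [t y] [t' y'] /= + <-{t'}; rewrite /constraint.
case: (eqVneq s t) => [<-|st] /= ca m; split; rewrite //= ?(negbTE ca) ?xpair_eqE.
- by rewrite eqxx (negbTE m).
- by rewrite /dcover_adj /= eqxx.
- by rewrite (negbTE st).
- by rewrite /dcover_adj /= (eqP m).
Qed.

Lemma dcover_match_swap u v u' v' : dcover_match u v u' v' -> dcover_match v u v' u'.
Proof.
case=> h1 h2 he ha; split=> //; first by rewrite eq_sym he eq_sym.
by rewrite dcover_adj_sym ha dcover_adj_sym.
Qed.

Lemma dcover_match_diag u v u' v' : dcover_match u v u' v' -> dcover_match u u u' u'.
Proof. by case=> h1 _ _ _; split; rewrite // ?eqxx ?dcover_adj_irr. Qed.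

Lemma dcover_forth : forth_system dcover_match.
Proof.
split; [by move=> u v u' v' [] | by move=> u v u' v' [] | exact: dcover_match_swap
       | exact: dcover_match_diag | | ].
- by move=> c; exists (c.1, point0 S2); split; rewrite // ?eqxx ?dcover_adj_irr.
move=> a1 a2 b1 b2 m c; have [->|ca1] := eqVneq c a1.
  by exists b1; split=> //; apply: dcover_match_diag m.
have [->|ca2] := eqVneq c a2.
  have m21 := dcover_match_swap m.
  by exists b2; split; last apply: dcover_match_diag m21.
have [h1 h2 he _] := m.
have [|z /andP[z1 z2]] := @exists_meets2 S2 b1.2 b2.2 (constraint c a1) (constraint c a2).
  move=> eb e1 e2; rewrite /constraint.
  case: ifP => // /negbT c1 [<-]; case: ifP => // /negbT c2 [<-].
  have a12 : a1.1 = a2.1 by move: c1 c2; case: (c.1); case: (a1.1); case: (a2.1).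
  have b12 : b1 = b2 by apply: injective_projections; rewrite // -h1 -h2.
  have /eqP a1a2 : a1 == a2 by rewrite he b12.
  by rewrite a1a2.
by exists (c.1, z); split; apply: dcover_match_meets.
Qed.

End DoubleCoverMatch.

Lemma dcover_forth_transpose (S1 S2 : ext_structure) :
  forth_system (transpose_rel (@dcover_match S1 S2)).
Proof.
apply: forth_system_iff (dcover_forth S2 S1) => u' v' u v.
by split; case=> h1 h2 he ha; split.
Qed.

(* A 4-cycle of the double cover alternates sides, so its two points on one
   side have two common neighbours. *)
Lemma dcover_C4_free (S : ext_structure) :
  (forall a1 a2 l1 l2 : S, a1 != a2 ->
     inc a1 l1 -> inc a2 l1 -> inc a1 l2 -> inc a2 l2 -> l1 = l2) ->
  ~ contains_subgraph (dcover S) C4.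
Proof.
move=> unique_line /contains_C4P[[s0 p0] [[s1 p1] [[s2 p2] [[s3 p3]]]]].
rewrite /= /dcover_adj /= => -[/andP[s01 i01] /andP[s12 i12] /andP[s23 i23] /andP[s30 i30]].
have s02 : s0 = s2 by move: s01 s12; case: (s0); case: (s1); case: (s2).
have s13 : s1 = s3 by move: s12 s23; case: (s1); case: (s2); case: (s3).
rewrite s02 s13 !xpair_eqE !eqxx /= => /andP[p02 /negP[]].
by rewrite (unique_line p0 p2 p1 p3) // inc_sym.
Qed.

Lemma dcover_tw_at_least (S : ext_structure) k :
  (forall a : S, k <= #|[set b | inc a b]|) -> tw_at_least (dcover S) k.
Proof.
move=> deg_k; apply: (@tw_at_least_min_degree (dcover S) k (true, point0 S)) => v.
exact: leq_trans (deg_k v.2) (dcover_degree v).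
Qed.

(** * Rook's boards *)

Section Rook.
Variable n : nat.

Definition rook_point := ('I_n.+3 * 'I_n.+3)%type.

(* A board with at least three rows is needed for the extension axiom. *)
Definition rook_inc (a b : rook_point) := (a.1 == b.1) || (a.2 == b.2).

Lemma rook_inc_sym : symmetric rook_inc.
Proof. by move=> a b; rewrite /rook_inc eq_sym (eq_sym a.2). Qed.

Let ord_neq2 (i j : 'I_n.+3) : exists k, k != i /\ k != j.
Proof. by apply: exists_neq2; rewrite card_ord. Qed.

Lemma rook_separate (a1 a2 : rook_point) :
  a1 != a2 -> exists b, rook_inc a1 b /\ ~~ rook_inc a2 b.
Proof.
case: a1 a2 => [x1 y1] [x2 y2]; rewrite xpair_eqE /rook_inc /=.
have [<-|x12] := eqVneq x1 x2 => /= [y12|_].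
  have [z [zx _]] := ord_neq2 x1 x1; exists (z, y1).
  by rewrite /= eqxx orbT negb_or [x1 == _]eq_sym zx [y2 == _]eq_sym y12.
have [z [zy _]] := ord_neq2 y2 y2; exists (x1, z).
by rewrite /= eqxx negb_or [x2 == _]eq_sym x12 [y2 == _]eq_sym zy.
Qed.

Lemma rook_ext2 (a1 a2 : rook_point) : a1 != a2 -> forall e1 e2 : bool,
  exists b, rook_inc a1 b = e1 /\ rook_inc a2 b = e2.
Proof.
move=> a12 [] [].
- by exists (a1.1, a2.2); rewrite /rook_inc /= !eqxx orbT.
- by have [b [a1b /negbTE a2b]] := rook_separate a12; exists b.
- have a21 : a2 != a1 by rewrite eq_sym.
  by have [b [a2b /negbTE a1b]] := rook_separate a21; exists b.
have [x [x1 x2]] := ord_neq2 a1.1 a2.1; have [y [y1 y2]] := ord_neq2 a1.2 a2.2.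
by exists (x, y); rewrite /rook_inc /= ![_ == x]eq_sym ![_ == y]eq_sym (negbTE x1)
  (negbTE x2) (negbTE y1) (negbTE y2).
Qed.

Definition rook_ord1 : 'I_n.+3 := inord 1.

Lemma rook_ord01 : ord0 != rook_ord1.
Proof. by rewrite -val_eqE /= inordK. Qed.

Lemma rook_point01 : (ord0, ord0) != (rook_ord1, rook_ord1) :> rook_point.
Proof. by rewrite xpair_eqE (negbTE rook_ord01). Qed.

Definition rook : ext_structure := ExtStructure rook_inc_sym rook_ext2 rook_point01.

Lemma rook_degree (a : rook) : n.+3 <= #|[set b | inc a b]|.
Proof.
have inj : injective (fun y : 'I_n.+3 => (a.1, y) : rook) by move=> y1 y2 [].
rewrite -{1}(card_ord n.+3) -cardsT -(card_imset _ inj); apply/subset_leq_card/subsetP.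
by move=> _ /imsetP[y _ ->]; rewrite inE /= /rook_inc /= eqxx.
Qed.

Lemma rook_C4 : contains_subgraph (dcover rook) C4.
Proof.
apply/contains_C4P; pose i0 : 'I_n.+3 := ord0; pose i1 := rook_ord1.
exists (true, (i0, i0)), (false, (i0, i1)), (true, (i1, i1)), (false, (i1, i0)).
by rewrite /= /dcover_adj /= /rook_inc /= !eqxx !orbT !xpair_eqE (negbTE rook_ord01) !andbF.
Qed.

End Rook.

(** * Projective planes *)

Section ProjectivePlane.
Import GRing.Theory.
Local Open Scope ring_scope.
Variable F : finFieldType.

Definition vec := (F * F * F)%type.
Definition vec0 : vec := (0, 0, 0).
Definition dot (u v : vec) : F := u.1.1 * v.1.1 + u.1.2 * v.1.2 + u.2 * v.2.
Definition scale (c : F) (v : vec) : vec := (c * v.1.1, c * v.1.2, c * v.2).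
Definition vadd (u v : vec) : vec := (u.1.1 + v.1.1, u.1.2 + v.1.2, u.2 + v.2).
Definition cross (u v : vec) : vec :=
  (u.1.2 * v.2 - u.2 * v.1.2, u.2 * v.1.1 - u.1.1 * v.2, u.1.1 * v.1.2 - u.1.2 * v.1.1).

Definition normalize (v : vec) : vec :=
  if v.1.1 != 0 then scale v.1.1^-1 v else if v.1.2 != 0 then scale v.1.2^-1 v
  else scale v.2^-1 v.

Definition normalized (v : vec) := (v != vec0) && (normalize v == v).

Lemma vec_neq0 (v : vec) : (v != vec0) = [|| v.1.1 != 0, v.1.2 != 0 | v.2 != 0].
Proof. by case: v => [[x y] z]; rewrite /vec0 !xpair_eqE /= !negb_and -orbA. Qed.

Lemma dotC u v : dot u v = dot v u.
Proof. by rewrite /dot; ring. Qed.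

Lemma dotZl c u v : dot (scale c u) v = c * dot u v.
Proof. by rewrite /dot /scale /=; ring. Qed.

Lemma dotDl u w v : dot (vadd u w) v = dot u v + dot w v.
Proof. by rewrite /dot /vadd /=; ring. Qed.

Lemma dot0l v : dot vec0 v = 0.
Proof. by rewrite /dot /=; ring. Qed.

Lemma dot_cross_l a b : dot (cross a b) a = 0.
Proof. by rewrite /dot /cross /=; ring. Qed.

Lemma dot_cross_r a b : dot (cross a b) b = 0.
Proof. by rewrite /dot /cross /=; ring. Qed.

Lemma cross_crossr l a b :
  cross l (cross a b) = vadd (scale (dot l b) a) (scale (- dot l a) b).
Proof. by rewrite /cross /vadd /scale /dot /=; congr (_, _, _); ring. Qed.

Lemma scale0 v : scale 0 v = vec0.
Proof. by rewrite /scale !mul0r. Qed.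

Lemma scale1 v : scale 1 v = v.
Proof. by case: v => [[x y] z]; rewrite /scale /= !mul1r. Qed.

Lemma scale_neq0 c v : c != 0 -> v != vec0 -> scale c v != vec0.
Proof. by move=> c0; rewrite !vec_neq0 /scale /= !mulf_eq0 (negbTE c0). Qed.

Lemma normalizeE v : v != vec0 -> exists2 c, c != 0 & normalize v = scale c v.
Proof.
rewrite vec_neq0 /normalize; case: ifP => [x0 _|_].
  by exists v.1.1^-1; rewrite ?invr_eq0.
case: ifP => [y0 _|_ /= z0].
  by exists v.1.2^-1; rewrite ?invr_eq0.
by exists v.2^-1; rewrite ?invr_eq0.
Qed.

Lemma normalizeZ c v : c != 0 -> normalize (scale c v) = normalize v.
Proof.
move=> c0; case: v => [[x y] z]; rewrite /normalize /scale /= !mulf_eq0 (negbTE c0) /=.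
case: ifP => x0; first by congr (_, _, _); field; rewrite c0 x0.
case: ifP => y0; first by congr (_, _, _); field; rewrite c0 y0.
move/negbFE/eqP: x0 => ->; move/negbFE/eqP: y0 => ->.
have [->|z0] := eqVneq z 0; first by rewrite !(mulr0, mul0r, invr0).
by congr (_, _, _); field; rewrite c0 z0.
Qed.

Lemma ratio_eq (a b p q : F) : a != 0 -> a * q = p * b -> q = p / a * b.
Proof. by move=> a0 e; apply: (mulfI a0); rewrite e; field. Qed.

Lemma cross_eq0 u w : u != vec0 -> cross u w = vec0 -> exists c, w = scale c u.
Proof.
case: u w => [[x1 y1] z1] [[x2 y2] z2]; rewrite vec_neq0 /cross /scale /= => u0.
case=> /subr0_eq e1 /subr0_eq e2 /subr0_eq e3.
have [x1_0|x10] := eqVneq x1 0; last first.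
  exists (x2 / x1); congr (_, _, _); apply: ratio_eq x10 _.
  - by rewrite mulrC.
  - by rewrite e3 mulrC.
  - by rewrite -e2 mulrC.
have [y1_0|y10] := eqVneq y1 0; last first.
  exists (y2 / y1); congr (_, _, _); apply: ratio_eq y10 _.
  - by rewrite -e3 x1_0 mul0r mulr0.
  - by rewrite mulrC.
  - by rewrite e1 mulrC.
have z10 : z1 != 0 by move: u0; rewrite x1_0 y1_0 eqxx.
exists (z2 / z1); congr (_, _, _); apply: ratio_eq z10 _.
- by rewrite e2 x1_0 mul0r mulr0.
- by rewrite -e1 y1_0 mul0r mulr0.
- by rewrite mulrC.
Qed.

Lemma cross_eq0_scale u w : u != vec0 -> w != vec0 -> cross u w = vec0 ->
  exists2 c, c != 0 & w = scale c u.
Proof.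
move=> u0 w0 /(cross_eq0 u0)[c wE]; exists c => //.
by apply: contra_neq w0 => c0; rewrite wE c0 scale0.
Qed.

(* A line is
   identified with its pole, so the double cover of [perp] is the point-line
   incidence graph, and [join a b] is the line through [a] and [b]. *)
Definition proj_point := {v : vec | normalized v}.

Lemma proj_point_neq0 (a : proj_point) : val a != vec0.
Proof. by case: a => v /= /andP[]. Qed.

Lemma normalize_proj_point (a : proj_point) : normalize (val a) = val a.
Proof. by case: a => v /= /andP[_ /eqP]. Qed.

Lemma normalized_normalize v : v != vec0 -> normalized (normalize v).
Proof.
move=> v0; have [c c0 vE] := normalizeE v0.
by rewrite /normalized vE normalizeZ // vE eqxx andbT scale_neq0.
Qed.

Lemma proj_point_scale_inj (a b : proj_point) c : c != 0 -> val a = scale c (val b) -> a = b.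
Proof.
by move=> c0 abE; apply: val_inj; rewrite -normalize_proj_point abE normalizeZ // normalize_proj_point.
Qed.

Lemma normalized_unit_x : normalized (1, 0, 0).
Proof.
by rewrite /normalized /normalize /= !eqxx ?oner_neq0 /= invr1 scale1 eqxx andbT vec_neq0 /=
  oner_neq0 ?orbT.
Qed.

Lemma normalized_unit_y : normalized (0, 1, 0).
Proof.
by rewrite /normalized /normalize /= !eqxx ?oner_neq0 /= invr1 scale1 eqxx andbT vec_neq0 /=
  oner_neq0 ?orbT.
Qed.

Lemma normalized_unit_z : normalized (0, 0, 1).
Proof.
by rewrite /normalized /normalize /= !eqxx ?oner_neq0 /= invr1 scale1 eqxx andbT vec_neq0 /=
  oner_neq0 ?orbT.
Qed.

Definition unit_x : proj_point := exist (fun v : vec => normalized v) _ normalized_unit_x.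
Definition unit_y : proj_point := exist (fun v : vec => normalized v) _ normalized_unit_y.
Definition unit_z : proj_point := exist (fun v : vec => normalized v) _ normalized_unit_z.

Lemma unit_x_neq_y : unit_x != unit_y.
Proof. by rewrite -val_eqE /= !xpair_eqE oner_eq0. Qed.

(* The point spanned by a nonzero vector; [unit_z] is a junk value for [vec0]. *)
Definition mkpoint (v : vec) : proj_point := insubd unit_z (normalize v).

Lemma mkpointE v : v != vec0 -> val (mkpoint v) = normalize v.
Proof. by move=> v0; rewrite /mkpoint insubdK //; apply: normalized_normalize. Qed.

Lemma dot_normalize v a : v != vec0 -> (dot (normalize v) a == 0) = (dot v a == 0).
Proof. by move=> v0; have [c c0 ->] := normalizeE v0; rewrite dotZl mulf_eq0 (negbTE c0). Qed.

Definition perp (a b : proj_point) := dot (val a) (val b) == 0.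

Lemma perp_sym : symmetric perp.
Proof. by move=> a b; rewrite /perp dotC. Qed.

Lemma exists_not_perp (v : vec) : v != vec0 -> exists c : proj_point, dot v (val c) != 0.
Proof.
rewrite vec_neq0 => /or3P[v0|v0|v0].
- by exists unit_x; rewrite /dot /= mulr1 !mulr0 !addr0.
- by exists unit_y; rewrite /dot /= mulr1 !mulr0 add0r addr0.
- by exists unit_z; rewrite /dot /= mulr1 !mulr0 !add0r.
Qed.

Lemma cross_points_neq0 (a b : proj_point) : a != b -> cross (val a) (val b) != vec0.
Proof.
apply: contraNneq => /(cross_eq0_scale (proj_point_neq0 a) (proj_point_neq0 b))[c c0 bE].
by rewrite (proj_point_scale_inj c0 bE).
Qed.

Definition join (a b : proj_point) := mkpoint (cross (val a) (val b)).

Lemma perp_join_l a b : a != b -> perp (join a b) a.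
Proof.
by move=> ab; rewrite /perp mkpointE ?dot_normalize ?cross_points_neq0 // dot_cross_l.
Qed.

Lemma perp_join_r a b : a != b -> perp (join a b) b.
Proof.
by move=> ab; rewrite /perp mkpointE ?dot_normalize ?cross_points_neq0 // dot_cross_r.
Qed.

(* By the triple product expansion, [l] is parallel to [cross a b]. *)
Lemma join_unique a b l : a != b -> perp l a -> perp l b -> l = join a b.
Proof.
move=> ab /eqP la /eqP lb; apply: val_inj; rewrite mkpointE ?cross_points_neq0 //.
have : cross (val l) (cross (val a) (val b)) = vec0.
  by rewrite cross_crossr la lb oppr0 /vadd /scale /= !mul0r !addr0.
case/(cross_eq0_scale (proj_point_neq0 l) (cross_points_neq0 ab)) => c c0 ->.
by rewrite normalizeZ // normalize_proj_point.
Qed.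

Lemma perp_common_unique (a1 a2 l1 l2 : proj_point) : a1 != a2 ->
  perp a1 l1 -> perp a2 l1 -> perp a1 l2 -> perp a2 l2 -> l1 = l2.
Proof.
move=> a12 a1l1 a2l1 a1l2 a2l2.
by rewrite (join_unique a12 (l := l1)) 1?(join_unique a12 (l := l2)) // perp_sym.
Qed.

Lemma perp_separate (a1 a2 : proj_point) : a1 != a2 -> exists b, perp a1 b /\ ~~ perp a2 b.
Proof.
move=> a12; have [c /negbTE c_off] := exists_not_perp (proj_point_neq0 (join a1 a2)).
have a1c : a1 != c by apply: contraFneq c_off => <-; apply: perp_join_l.
exists (join a1 c); split; first by rewrite perp_sym perp_join_l.
apply: contraFN c_off => a2_on; have a2_c : perp (join a1 c) a2 by rewrite perp_sym.
by rewrite -(join_unique a12 (perp_join_l a1c) a2_c); apply: perp_join_r.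
Qed.

Lemma perp_ext2 (a1 a2 : proj_point) : a1 != a2 -> forall e1 e2 : bool,
  exists b, perp a1 b = e1 /\ perp a2 b = e2.
Proof.
move=> a12; have a21 : a2 != a1 by rewrite eq_sym.
have [w [a1w /negbTE a2w]] := perp_separate a12.
have [u [a2u /negbTE a1u]] := perp_separate a21.
case=> [] [].
- by exists (join a1 a2); rewrite !(perp_sym _ (join _ _)) perp_join_l ?perp_join_r.
- by exists w.
- by exists u.
pose v := vadd (val u) (val w).
have v1 : dot v (val a1) != 0.
  by rewrite dotDl [dot (val w) _]dotC (eqP a1w) addr0 dotC; apply/negbT.
have v2 : dot v (val a2) != 0.
  by rewrite dotDl [dot (val u) _]dotC (eqP a2u) add0r dotC; apply/negbT.
have v0 : v != vec0 by apply: contraNneq v1 => ->; rewrite dot0l.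
exists (mkpoint v); rewrite /perp mkpointE // !(dotC (val _) (normalize v)) !dot_normalize //.
by rewrite (negbTE v1) (negbTE v2).
Qed.

Definition proj_plane : ext_structure := ExtStructure perp_sym perp_ext2 unit_x_neq_y.

(* Through a point [y] off the line [x], the map [l |-> join l y] injects the
   points of [x] into those of [y]. *)
Lemma card_perp_le (x y : proj_point) : ~~ perp x y ->
  (#|[set l | perp x l]| <= #|[set l | perp y l]|)%N.
Proof.
move=> xy; have l_neq_y l : l \in [set l | perp x l] -> l != y.
  by rewrite inE; apply: contraTneq => ->.
have inj : {in [set l | perp x l] &, injective (join ^~ y)}.
  move=> l1 l2 xl1 xl2 /= eq_join.
  have [l1y l2y] := (l_neq_y _ xl1, l_neq_y _ xl2).
  have x_join : x != join l1 y by apply: contraNneq _ xy => ->; apply: perp_join_r.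
  have on_both l : perp x l -> perp (join l1 y) l -> l = join x (join l1 y).
    by move=> xl jl; apply: join_unique x_join _ _; rewrite perp_sym.
  have j2 : perp (join l1 y) l2 by rewrite eq_join perp_join_l.
  rewrite !inE in xl1 xl2.
  by rewrite (on_both l1 xl1 (perp_join_l l1y)) (on_both l2 xl2 j2).
rewrite -(card_in_imset inj); apply/subset_leq_card/subsetP => _ /imsetP[l xl ->].
by rewrite inE perp_sym perp_join_r ?l_neq_y.
Qed.

Lemma card_perp_eq (x y : proj_point) : #|[set l | perp x l]| = #|[set l | perp y l]|.
Proof.
have [z [zx zy]] : exists z, ~~ perp z x /\ ~~ perp z y.
  have [<-|xy] := eqVneq x y.
    by have [c c_off] := exists_not_perp (proj_point_neq0 x); exists c; rewrite /perp dotC.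
  by have [z [xz yz]] := perp_ext2 xy false false; exists z; rewrite perp_sym xz perp_sym yz.
have le_zx := card_perp_le zx; have le_zy := card_perp_le zy.
have le_xz : (#|[set l | perp x l]| <= #|[set l | perp z l]|)%N.
  by apply: card_perp_le; rewrite perp_sym.
have le_yz : (#|[set l | perp y l]| <= #|[set l | perp z l]|)%N.
  by apply: card_perp_le; rewrite perp_sym.
by apply/eqP; rewrite eqn_leq (leq_trans le_xz le_zy) (leq_trans le_yz le_zx).
Qed.

Lemma proj_plane_degree (x : proj_plane) : (#|F| <= #|[set y | inc x y]|)%N.
Proof.
rewrite (card_perp_eq x unit_z).
have v0 t : (1, t, 0) != vec0 by rewrite vec_neq0 /= oner_neq0.
have normal t : normalize (1, t, 0) = (1, t, 0).
  by rewrite /normalize /= oner_neq0 invr1 scale1.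
have inj : injective (fun t : F => mkpoint (1, t, 0)).
  by move=> t1 t2 /(congr1 val); rewrite !mkpointE // !normal => -[].
rewrite -cardsT -(card_imset _ inj); apply/subset_leq_card/subsetP.
move=> _ /imsetP[t _ ->]; rewrite inE /perp mkpointE // normal /dot /=.
by rewrite !mul0r mulr0 !addr0.
Qed.

End ProjectivePlane.

(** * The width of the 4-cycle *)

Lemma C4_not_definable_3vars Phi k :
  sentence Phi -> var_width Phi <= 3 -> ~ defines_on_tw C4 Phi k.
Proof.
move=> closed_Phi width_Phi defines.
have [p k_lt_p p_prime] := prime_above k.
pose G := dcover (rook k); pose H := dcover (proj_plane 'F_p).
have twG : tw_at_least G k.
  by apply: dcover_tw_at_least => a; apply: leq_trans (rook_degree a); rewrite !leqW.
have twH : tw_at_least H k.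
  apply: dcover_tw_at_least => a; apply: leq_trans (proj_plane_degree a).
  by rewrite card_Fp // ltnW.
have G_Phi : models G Phi by apply/(defines G (dcover_two_connected _) twG); apply: rook_C4.
have H_Phi : models H Phi.
  exact: (models_3vars_transfer (dcover_forth _ _) (dcover_forth_transpose _ _)
    (true, point0 _) closed_Phi width_Phi G_Phi).
apply: (@dcover_C4_free (proj_plane 'F_p)); first exact: perp_common_unique.
by apply/(defines H (dcover_two_connected _) twH).
Qed.

Theorem proposition18 : W'tw_eq C4 4.
Proof.
split.
  exists C4_sentence, 0; split=> // G [G3 _ _] _.
  have /card_gt0P[v _] : 0 < #|G| by apply: leq_trans G3.
  exact: models_C4_sentence.
move=> m [Phi [k [closed_Phi <- defines]]]; rewrite leqNgt; apply/negP => lt_w4.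
exact: C4_not_definable_3vars closed_Phi lt_w4 defines.
Qed.
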